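(* Let $T_l$ be a $2m$ deck-shuffler IET and $H_l$ as below. For $C\subset[0,1)$ let $J(C)$ denote the closed convex hull of $H_l(C)$ in $\mathbb{R}$. For sets $X,Y\subset\mathbb{R}$ write $X<Y$ if $x<y$ for all $x\in X$, $y\in Y$. Then: (i) if $1\le i\le m-1$ and $H_l(A_i)$ is a single point, then $J(B_i)-\tfrac12<J(A_i)$ or $J(A_i)<J(B_{i+1})-\tfrac12$; (ii) if $2\le i\le m$ and $H_l(B_i)$ is a single point, then $J(A_{i-1})+\tfrac12<J(B_i)$ or $J(B_i)<J(A_i)+\tfrac12$; (iii) if $H_l(A_m\cup B_1)$ is a single point, then $J(B_m)-\tfrac12<J(A_m\cup B_1)$ or $J(A_m\cup B_1)<J(A_1)+\tfrac12$.
   Context: A $2m$ deck-shuffler IET $T_l$ is the map $[0,1)\to[0,1)$ determined by a length vector $l$ giving a partition of $[0,1)$ into consecutive left-closed right-open intervals $A_1<\dots<A_m<B_1<\dots<B_m$ of positive lengths, with $T_l(x)=x+|B_1|+\dots+|B_i|$ for $x\in A_i$ and $T_l(x)=x-|A_i|-\dots-|A_m|$ for $x\in B_i$. $B=B_1\cup\dots\cup B_m$ and $H_l(x)=\sum_{n=0}^\infty \chi_B(T_l^n x)/2^{n+1}$. For a set $X$ and $c\in\mathbb{R}$, $X+c=\{x+c:x\in X\}$. *)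

From Stdlib Require Import Reals Rtopology.
From Coquelicot Require Import Coquelicot.
Open Scope R_scope.

(* psum f n = f 1 + ... + f n  (indices start at 1). *)
Fixpoint psum (f : nat -> R) (n : nat) : R :=
  match n with O => 0 | S k => psum f k + f (S k) end.

Definition ind (u v x : R) : R :=
  if Rle_dec u x then (if Rlt_dec x v then 1 else 0) else 0.

Section DS.
(* m : number of blocks; a i = |A_i|, b i = |B_i| for 1 <= i <= m. *)
Variables (m : nat) (a b : nat -> R).

Definition SA : R := psum a m.

Definition Aset (i : nat) (x : R) : Prop := psum a (i - 1) <= x < psum a i.
Definition Bset (i : nat) (x : R) : Prop :=
  SA + psum b (i - 1) <= x < SA + psum b i.

(* The deck-shuffler map: x in A_i |-> x + |B_1|+..+|B_i|,
   x in B_i |-> x - (|A_i|+..+|A_m|). (Identity outside [0,1), irrelevant.) *)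
Definition Tmap (x : R) : R :=
  x + psum (fun i => ind (psum a (i - 1)) (psum a i) x * psum b i) m
    - psum (fun i => ind (SA + psum b (i - 1)) (SA + psum b i) x
                     * (SA - psum a (i - 1))) m.

Definition chiB (x : R) : R := ind SA (SA + psum b m) x.

Definition Hmap (x : R) : R :=
  Series (fun n => chiB (Nat.iter n Tmap x) / 2 ^ (n + 1)).
End DS.

Definition image (f : R -> R) (C : R -> Prop) (y : R) : Prop :=
  exists x, C x /\ f x = y.

Definition convex_set (K : R -> Prop) : Prop :=
  forall x y t, K x -> K y -> 0 <= t <= 1 -> K (t * x + (1 - t) * y).

Definition closed_convex_hull (X : R -> Prop) (y : R) : Prop :=
  forall K : R -> Prop, closed_set K -> convex_set K ->
    (forall x, X x -> K x) -> K y.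

Definition is_singleton (X : R -> Prop) : Prop :=
  exists c, forall y, X y <-> y = c.

Definition set_lt (X Y : R -> Prop) : Prop :=
  forall x y, X x -> Y y -> x < y.

Definition shift (X : R -> Prop) (c : R) (y : R) : Prop :=
  exists x, X x /\ y = x + c.

Definition setU (X Y : R -> Prop) (x : R) : Prop := X x \/ Y x.

(* H x is the binary number whose digits are the colours chi_B (T^n x), so
   H x = chi x / 2 + H (T x) / 2, and H is monotone because T expands
   distances within each colour.  If H is constant c on A_i, it is constant
   2c on T (A_i) = [L, L + |A_i|), which sits immediately right of T (B_i);
   so (i) amounts to H staying uniformly below H L to the left of L, and (ii)
   is the same statement with the roles of the colours exchanged.  Expansion
   makes a level of positive length eventually periodic, and then L itself is
   periodic.  If H approached H L from the left, points just left of L would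
   shadow the orbit of L for a full period.  Following the left germ of T
   along that orbit, either they return to themselves, which is impossible
   because their preimages have the colour opposite to that of the preimage
   of L, or they meet a change of colour or a jump, which the shadowing
   excludes.  In (iii) the hypothesis cannot hold: A_m and B_1 have different
   colours, and H separates the colours by a fixed margin. *)

From Pilot Require Import Defs.
From Stdlib Require Import Reals Rtopology.
From Coquelicot Require Import Coquelicot.
From Stdlib Require Import Lra Lia Classical.
From Stdlib Require List ZArith.
Open Scope R_scope.

Lemma exists_nat_gt (r : R) : exists n : nat, r < INR n.
Proof.
  destruct (archimed r) as [Hup _].
  destruct (ZArith_dec.Z_le_gt_dec 0 (up r)) as [Hz|Hz].
  - exists (Z.to_nat (up r)). rewrite INR_IZR_INZ, Znat.Z2Nat.id by assumption. lra.
  - exists 0%nat. apply Z.gt_lt, IZR_lt in Hz. simpl. lra.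
Qed.

Lemma exists_nat_mul_gt (r g : R) : 0 < g -> exists n : nat, r < INR n * g.
Proof.
  intros Hg. destruct (exists_nat_gt (r / g)) as [n Hn]. exists n.
  apply Rmult_lt_compat_r with (r := g) in Hn; [|lra].
  unfold Rdiv in Hn. rewrite Rmult_assoc, Rinv_l, Rmult_1_r in Hn; lra.
Qed.

Lemma pow2_ge_1 (n : nat) : 1 <= 2 ^ n.
Proof. induction n; simpl; lra. Qed.

Lemma exists_pow2_mul_gt_1 (d : R) : 0 < d -> exists n : nat, 1 < 2 ^ n * d.
Proof.
  intros Hd. destruct (exists_nat_mul_gt 1 d Hd) as [n Hn]. exists n.
  assert (Hn2 : INR n <= 2 ^ n).
  { clear Hn. induction n; [simpl; lra|]. rewrite S_INR. simpl. pose proof (pow2_ge_1 n). lra. }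
  pose proof (Rmult_le_compat_r d _ _ (Rlt_le _ _ Hd) Hn2). lra.
Qed.

Lemma drift_bound (u : nat -> R) (g : R) (n : nat) :
  (forall k, (k < n)%nat -> u k + g <= u (S k)) -> u 0%nat + INR n * g <= u n.
Proof.
  induction n as [|n IH]; intros Hu; [simpl; lra|].
  rewrite S_INR. pose proof (IH ltac:(intros; apply Hu; lia)). pose proof (Hu n ltac:(lia)). lra.
Qed.

Lemma least_failure (P : nat -> Prop) (p : nat) :
  (forall j, (j < p)%nat -> P j) \/
  (exists n, (n < p)%nat /\ ~ P n /\ forall j, (j < n)%nat -> P j).
Proof.
  induction p as [|p [Hall|Hfail]].
  - left; intros; lia.
  - destruct (classic (P p)) as [Hp|Hp].
    + left; intros j Hj. destruct (Nat.eq_dec j p) as [->|]; [auto|apply Hall; lia].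
    + right; exists p; auto.
  - right. destruct Hfail as [n [Hn Hrest]]. exists n; split; [lia|auto].
Qed.

Lemma pigeonhole_nat (M : nat) (g : nat -> nat) :
  (forall i, (i <= M)%nat -> (g i < M)%nat) ->
  exists i j, (i < j <= M)%nat /\ g i = g j.
Proof.
  intros Hg. apply NNPP; intro Hno.
  assert (Hnodup : List.NoDup (List.map g (List.seq 0 (S M)))).
  { apply List.NoDup_map_NoDup_ForallPairs; [|apply List.seq_NoDup].
    intros x y Hx Hy Hxy. apply List.in_seq in Hx, Hy.
    destruct (Compare_dec.lt_eq_lt_dec x y) as [[H|H]|H]; auto;
      exfalso; apply Hno; [exists x, y | exists y, x]; split; auto; lia. }
  assert (Hincl : List.incl (List.map g (List.seq 0 (S M))) (List.seq 0 M)).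
  { intros z Hz. apply List.in_map_iff in Hz. destruct Hz as [x [<- Hx]].
    apply List.in_seq in Hx. apply List.in_seq. specialize (Hg x). lia. }
  pose proof (List.NoDup_incl_length Hnodup Hincl) as Hlen.
  rewrite List.length_map, !List.length_seq in Hlen. lia.
Qed.

Definition grid_index (r x : R) : nat := Z.to_nat (up (x / r)).

Lemma grid_index_spec (r x : R) : 0 < r -> 0 <= x ->
  x < INR (grid_index r x) * r <= x + r.
Proof.
  intros Hr Hx. unfold grid_index.
  destruct (archimed (x / r)) as [Hup1 Hup2].
  assert (Hq : 0 <= x / r) by (apply Rdiv_le_0_compat; lra).
  rewrite INR_IZR_INZ, Znat.Z2Nat.id by (apply le_IZR; lra).
  assert (Ex : x = x / r * r) by (field; lra).
  set (u := x / r) in *. set (U := IZR (up u)) in *.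
  split; nra.
Qed.

Definition in01 (x : R) : Prop := 0 <= x < 1.

Section ExpandingMap.
Variables (T H chi : R -> R) (dl : R).
Hypothesis T_in01 : forall x, in01 x -> in01 (T x).
Hypothesis T_inj : forall x y, in01 x -> in01 y -> T x = T y -> x = y.
Hypothesis H_rec : forall x, in01 x -> H x = chi x / 2 + H (T x) / 2.
Hypothesis dl_pos : 0 < dl.
Hypothesis H_sep : forall x, in01 x ->
  (chi x = 0 /\ H x <= 1/2 - dl) \/ (chi x = 1 /\ 1/2 + dl <= H x).
Hypothesis H_mono : forall x y, in01 x -> in01 y -> x <= y -> H x <= H y.
Hypothesis T_expand : forall x y, in01 x -> in01 y -> x < y -> chi x = chi y ->
  T x < T y /\ y - x <= T y - T x.

Definition left_translating (z : R) : Prop :=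
  exists eps, 0 < eps /\
    forall e, 0 <= e <= eps -> in01 (z - e) /\ T (z - e) = T z - e.

Definition colour_boundary (z : R) : Prop :=
  exists eps, 0 < eps /\
    forall e, 0 < e <= eps -> in01 (z - e) -> chi (z - e) <> chi z.

(* Left of z, T continues the image of a point w of the other colour. *)
Definition jumps_back (z : R) : Prop :=
  exists w, in01 w /\ chi w <> chi z /\ T w <= T z /\
    exists eps, 0 < eps /\
      forall e, 0 < e <= eps -> in01 (z - e) /\ T (z - e) = T w - e.

Hypothesis T_left_germ : forall z, in01 z ->
  left_translating z \/ colour_boundary z \/ jumps_back z.

Local Notation it n x := (Nat.iter n T x).

Lemma iter_in01 n x : in01 x -> in01 (it n x).
Proof. intros Hx; induction n; simpl; auto. Qed.

Lemma chi_eq_of_H_near x y : in01 x -> in01 y -> Rabs (H x - H y) < 2 * dl ->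
  chi x = chi y.
Proof.
  intros Hx Hy E. apply Rabs_def2 in E.
  destruct (H_sep x Hx) as [[? ?]|[? ?]]; destruct (H_sep y Hy) as [[? ?]|[? ?]]; lra.
Qed.

Lemma chi_eq_of_H_eq x y : in01 x -> in01 y -> H x = H y -> chi x = chi y.
Proof.
  intros Hx Hy E. apply chi_eq_of_H_near; auto.
  rewrite E, Rminus_diag, Rabs_R0. lra.
Qed.

Lemma H_T x : in01 x -> H (T x) = 2 * H x - chi x.
Proof. intros Hx. rewrite (H_rec x Hx). lra. Qed.

Lemma H_iter_level n x y : in01 x -> in01 y -> H x = H y -> H (it n x) = H (it n y).
Proof.
  intros Hx Hy E; induction n as [|n IH]; simpl; auto.
  pose proof (iter_in01 n x Hx) as Hxn; pose proof (iter_in01 n y Hy) as Hyn.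
  rewrite !H_T, (chi_eq_of_H_eq _ _ Hxn Hyn IH), IH; auto.
Qed.

Lemma H_iter_gap n x y : in01 x -> in01 y -> 0 <= H y - H x ->
  2 ^ n * (H y - H x) < 2 * dl ->
  forall j, (j <= n)%nat -> H (it j y) - H (it j x) = 2 ^ j * (H y - H x).
Proof.
  intros Hx Hy Hd0 Hd j. induction j as [|j IH]; intros Hj; [simpl; lra|].
  specialize (IH ltac:(lia)).
  pose proof (iter_in01 j x Hx); pose proof (iter_in01 j y Hy).
  assert (Hpow : 2 ^ j <= 2 ^ n) by (apply Rle_pow; lra || lia).
  assert (Hchi : chi (it j y) = chi (it j x)).
  { apply chi_eq_of_H_near; auto. rewrite IH, Rabs_pos_eq; pose proof (pow2_ge_1 j); nra. }
  simpl. rewrite !H_T, Hchi by auto. lra.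
Qed.

Lemma chi_iter_gap n x y : in01 x -> in01 y -> 0 <= H y - H x ->
  2 ^ n * (H y - H x) < 2 * dl ->
  forall j, (j <= n)%nat -> chi (it j x) = chi (it j y).
Proof.
  intros Hx Hy Hd0 Hd j Hj.
  assert (Hpow : 2 ^ j <= 2 ^ n) by (apply Rle_pow; lra || lia).
  apply chi_eq_of_H_near; auto using iter_in01.
  rewrite Rabs_minus_sym, (H_iter_gap n x y Hx Hy Hd0 Hd j Hj), Rabs_pos_eq;
    pose proof (pow2_ge_1 j); nra.
Qed.

Lemma iter_expanding p y y' : in01 y -> in01 y' -> y < y' -> H y = H y' ->
  it p y < it p y' /\ y' - y <= it p y' - it p y.
Proof.
  intros Hy Hy' Hlt E. induction p as [|p [IH1 IH2]]; [simpl; lra|].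
  destruct (T_expand (it p y) (it p y')) as [E1 E2]; auto using iter_in01.
  - apply chi_eq_of_H_eq; auto using iter_in01. apply H_iter_level; auto.
  - simpl. lra.
Qed.

(* Otherwise the T^p-orbit of y would move monotonically with steps no shorter
   than |T^p y - y| and leave [0, 1). *)
Lemma iter_fixes_invariant_level p v y :
  (forall u, in01 u -> H u = v -> H (it p u) = v) -> in01 y -> H y = v -> it p y = y.
Proof.
  intros Hinv Hy Hv.
  set (u k := Nat.iter k (fun x => it p x) y).
  assert (Hu : forall k, in01 (u k) /\ H (u k) = v).
  { induction k as [|k [IH1 IH2]]; [split; auto|].
    change (u (S k)) with (it p (u k)). split; [apply iter_in01 | apply Hinv]; auto. }
  assert (Hexp : forall k k', u k < u k' ->
            u (S k) < u (S k') /\ u k' - u k <= u (S k') - u (S k)).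
  { intros k k' Hlt. destruct (Hu k), (Hu k').
    apply iter_expanding; auto. congruence. }
  set (g := u 1%nat - u 0%nat).
  destruct (Rtotal_order g 0) as [Hg|[Hg|Hg]].
  - assert (Hstep : forall k, (- u k) + - g <= - u (S k)).
    { induction k as [|k IH]; [unfold g; simpl; lra|].
      destruct (Hexp (S k) k) as [_ Hd]; lra. }
    destruct (exists_nat_mul_gt 1 (- g)) as [n Hn]; [lra|].
    pose proof (drift_bound (fun k => - u k) (- g) n (fun k _ => Hstep k)).
    destruct (Hu 0%nat) as [[? ?] _], (Hu n) as [[? ?] _]. simpl in *. lra.
  - unfold g in Hg. simpl in Hg. lra.
  - assert (Hstep : forall k, u k + g <= u (S k)).
    { induction k as [|k IH]; [unfold g; simpl; lra|].
      destruct (Hexp k (S k)) as [_ Hd]; lra. }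
    destruct (exists_nat_mul_gt 1 g) as [n Hn]; [lra|].
    pose proof (drift_bound u g n (fun k _ => Hstep k)).
    destruct (Hu 0%nat) as [[? ?] _], (Hu n) as [[? ?] _]. lra.
Qed.

(* Expansion keeps T^n y0 - T^n L >= y0 - L, so a point of a fixed finite grid
   lies between them and carries the level of T^n L; two orbit points share one. *)
Lemma flat_level_recurs L y0 : in01 L -> in01 y0 -> L < y0 -> H L = H y0 ->
  exists k p, H (it (k + S p) L) = H (it k L).
Proof.
  intros HL Hy0 Hlt E.
  set (r := (y0 - L) / 2).
  assert (Hr : 0 < r) by (unfold r; lra).
  assert (Hr2 : 2 * r = y0 - L) by (unfold r; lra).
  clearbody r.
  set (g n := grid_index r (it n L)).
  assert (Hgrid : forall n, H (INR (g n) * r) = H (it n L) /\ INR (g n) * r < 1).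
  { intros n. pose proof (iter_in01 n L HL) as [? ?]. pose proof (iter_in01 n y0 Hy0) as [? ?].
    destruct (grid_index_spec r (it n L)) as [G1 G2]; auto.
    change (grid_index r (it n L)) with (g n) in G1, G2.
    destruct (iter_expanding n L y0) as [_ Hexp]; auto.
    assert (Ht : in01 (INR (g n) * r)) by (split; lra).
    split; [|lra].
    apply Rle_antisym.
    - rewrite (H_iter_level n L y0 HL Hy0 E). apply H_mono; auto using iter_in01. lra.
    - apply H_mono; auto using iter_in01; lra. }
  destruct (exists_nat_mul_gt 1 r Hr) as [M HM].
  destruct (pigeonhole_nat M g) as [i [j [Hij Hg]]].
  { intros i _. apply INR_lt, (Rmult_lt_reg_r r); [auto|].
    destruct (Hgrid i) as [_ ?]. lra. }
  exists i, (j - i - 1)%nat.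
  replace (i + S (j - i - 1))%nat with j by lia.
  destruct (Hgrid i) as [<- _], (Hgrid j) as [<- _]. rewrite Hg. reflexivity.
Qed.

Lemma flat_left_end_periodic L y0 : in01 L -> in01 y0 -> L < y0 -> H L = H y0 ->
  exists p, it (S p) L = L.
Proof.
  intros HL Hy0 Hlt E.
  destruct (flat_level_recurs L y0 HL Hy0 Hlt E) as [k [p Hk]]. exists p.
  assert (Hfix : it (S p) (it k L) = it k L).
  { apply (iter_fixes_invariant_level (S p) (H (it k L))); auto using iter_in01.
    intros u Hu Hv. rewrite (H_iter_level (S p) u (it k L)) by auto using iter_in01.
    rewrite <- Nat.iter_add, Nat.add_comm. exact Hk. }
  clear Hk. induction k as [|k IH]; [exact Hfix|].
  apply IH, T_inj; auto using iter_in01.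
  rewrite <- Nat.iter_swap. exact Hfix.
Qed.

Section PeriodicPoint.
Variables (L : R) (p : nat).
Hypothesis L_in01 : in01 L.
Hypothesis L_periodic : it (S p) L = L.

Lemma orbit_periodic k : it (S p) (it k L) = it k L.
Proof.
  rewrite <- Nat.iter_add, Nat.add_comm, Nat.iter_add, L_periodic. reflexivity.
Qed.

Lemma period_fixes_level k y : in01 y -> H y = H (it k L) -> it (S p) y = y.
Proof.
  apply (iter_fixes_invariant_level (S p) (H (it k L))).
  intros u Hu Hv. rewrite (H_iter_level (S p) u (it k L)), orbit_periodic;
    auto using iter_in01.
Qed.

(* The period of L fixes the whole level of T u, hence T^p (T u) = u. *)
Lemma chi_of_image_level u j : in01 u -> H (T u) = H (it (S j) L) ->
  chi u = chi (it j L).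
Proof.
  intros Hu Hlev.
  assert (Hback : it p (T u) = u).
  { apply T_inj; auto using iter_in01.
    exact (period_fixes_level (S j) (T u) (T_in01 u Hu) Hlev). }
  apply chi_eq_of_H_eq; auto using iter_in01.
  rewrite <- Hback, (H_iter_level p (T u) (it (S j) L)) by auto using iter_in01.
  rewrite <- Nat.iter_add. replace (p + S j)%nat with (j + S p)%nat by lia.
  rewrite Nat.iter_add, L_periodic. reflexivity.
Qed.

Lemma translating_orbit n : (forall j, (j < n)%nat -> left_translating (it j L)) ->
  exists eps, 0 < eps /\
    forall e, 0 <= e <= eps -> forall j, (j <= n)%nat -> it j (L - e) = it j L - e.
Proof.
  induction n as [|n IH]; intros Hgood.
  - exists 1; split; [lra|]. intros e _ j Hj. replace j with 0%nat by lia. reflexivity.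
  - destruct IH as [eps [Heps Htr]]; [intros; apply Hgood; lia|].
    destruct (Hgood n ltac:(lia)) as [eps' [Heps' Htr']].
    pose proof (Rmin_l eps eps'); pose proof (Rmin_r eps eps').
    exists (Rmin eps eps'). split; [apply Rmin_pos; auto|].
    intros e He j Hj. destruct (Nat.eq_dec j (S n)) as [->|Hne].
    + simpl. rewrite (Htr e ltac:(lra) n ltac:(lia)). apply Htr'. lra.
    + apply Htr; [lra|lia].
Qed.

Variables (wL e1 : R).
Hypothesis wL_in01 : in01 wL.
Hypothesis T_wL : T wL = L.
Hypothesis e1_pos : 0 < e1.
Hypothesis left_preimage : forall x, L - e1 <= x < L ->
  exists w, in01 w /\ T w = x /\ chi w <> chi wL.
Hypothesis approach : forall eta, 0 < eta ->
  exists x, in01 x /\ x < L /\ H L - eta < H x.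

Lemma approach_near e0 eta : 0 < e0 -> 0 < eta ->
  exists e, 0 < e <= e0 /\ in01 (L - e) /\
    0 <= H L - H (L - e) /\ 2 ^ S p * (H L - H (L - e)) < eta.
Proof.
  intros He0 Heta.
  assert (Hpow : 0 < 2 ^ S p) by (pose proof (pow2_ge_1 (S p)); lra).
  destruct (approach (eta / 2 ^ S p)) as [x0 [[Hx0 Hx0'] [Hx0L Hx0H]]].
  { apply Rdiv_lt_0_compat; auto. }
  pose proof (Rmax_l x0 (L - e0)); pose proof (Rmax_r x0 (L - e0)).
  set (x := Rmax x0 (L - e0)) in *.
  assert (HxL : x < L) by (apply Rmax_lub_lt; lra).
  assert (Hx : in01 x) by (destruct L_in01; split; lra).
  exists (L - x). replace (L - (L - x)) with x by ring.
  assert (H x0 <= H x) by (apply H_mono; auto; split; lra).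
  assert (H x <= H L) by (apply H_mono; auto; lra).
  split; [lra|]. split; [auto|]. split; [lra|].
  replace eta with (2 ^ S p * (eta / 2 ^ S p)) by (field; lra).
  apply Rmult_lt_compat_l; lra.
Qed.

Lemma not_all_translating : ~ (forall j, (j < S p)%nat -> left_translating (it j L)).
Proof.
  intros Hall.
  destruct (translating_orbit (S p) Hall) as [eps [Heps Htr]].
  destruct (approach_near (Rmin eps e1) dl) as [e [He [Hx [Hd0 Hd]]]];
    [apply Rmin_pos; auto | auto |].
  pose proof (Rmin_l eps e1); pose proof (Rmin_r eps e1).
  assert (Hret : it (S p) (L - e) = L - e).
  { rewrite (Htr e ltac:(lra) (S p) (le_n _)), L_periodic. reflexivity. }
  assert (HxL : H (L - e) = H L).
  { pose proof (H_iter_gap (S p) (L - e) L Hx L_in01 Hd0 ltac:(lra) (S p) (le_n _)) as G.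
    rewrite Hret, L_periodic in G. simpl in G. pose proof (pow2_ge_1 p). nra. }
  destruct (left_preimage (L - e)) as [w [Hw [Tw Hcw]]]; [lra|].
  apply Hcw.
  assert (HwL : wL = it p L).
  { apply T_inj; auto using iter_in01. rewrite T_wL. exact (eq_sym L_periodic). }
  rewrite HwL. apply chi_of_image_level; auto.
  rewrite Tw, HxL, L_periodic. reflexivity.
Qed.

Lemma orbit_not_colour_boundary n : (n <= p)%nat ->
  (forall j, (j < n)%nat -> left_translating (it j L)) ->
  ~ colour_boundary (it n L).
Proof.
  intros Hn Hgood [eps' [Heps' Hjump]].
  destruct (translating_orbit n Hgood) as [eps [Heps Htr]].
  destruct (approach_near (Rmin eps eps') dl) as [e [He [Hx [Hd0 Hd]]]];
    [apply Rmin_pos; auto | auto |].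
  pose proof (Rmin_l eps eps'); pose proof (Rmin_r eps eps').
  specialize (Hjump e ltac:(lra)).
  rewrite <- (Htr e ltac:(lra) n (le_n n)) in Hjump.
  apply (Hjump (iter_in01 n _ Hx)).
  apply (chi_iter_gap (S p)); auto; lra.
Qed.

Lemma orbit_not_jump_back n : (n <= p)%nat ->
  (forall j, (j < n)%nat -> left_translating (it j L)) ->
  ~ jumps_back (it n L).
Proof.
  intros Hn Hgood [w [Hw [Hcw [Hle [eps' [Heps' Hback]]]]]].
  pose proof (iter_in01 n L L_in01) as Hz.
  apply Hcw, chi_of_image_level; auto.
  apply Rle_antisym; [apply H_mono; [apply T_in01 | apply iter_in01 | ]; auto|].
  apply Rnot_lt_le; intro Hlt. change (it (S n) L) with (T (it n L)) in Hlt.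
  set (gam := H (T (it n L)) - H (T w)).
  destruct (translating_orbit n Hgood) as [eps [Heps Htr]].
  destruct (approach_near (Rmin eps eps') (Rmin dl gam)) as [e [He [Hx [Hd0 Hd]]]];
    [apply Rmin_pos; auto | apply Rmin_pos; unfold gam; lra |].
  pose proof (Rmin_l eps eps'); pose proof (Rmin_r eps eps').
  pose proof (Rmin_l dl gam); pose proof (Rmin_r dl gam).
  destruct (Hback e ltac:(lra)) as [_ HTe].
  assert (HSn : it (S n) (L - e) = T w - e).
  { simpl. rewrite (Htr e ltac:(lra) n (le_n n)). exact HTe. }
  assert (Hbelow : H (it (S n) (L - e)) <= H (T w)).
  { apply H_mono; auto using iter_in01. lra. }
  pose proof (H_iter_gap (S p) (L - e) L Hx L_in01 Hd0 ltac:(lra) (S n) ltac:(lia)) as G.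
  assert (Hpow : 2 ^ S n <= 2 ^ S p) by (apply Rle_pow; lra || lia).
  pose proof (Rmult_le_compat_r _ _ _ Hd0 Hpow).
  change (it (S n) L) with (T (it n L)) in G. unfold gam in *. lra.
Qed.

Lemma periodic_point_not_approached : False.
Proof.
  destruct (least_failure (fun j => left_translating (it j L)) (S p))
    as [Hall | [n [Hn [Hbad Hgood]]]].
  - exact (not_all_translating Hall).
  - destruct (T_left_germ (it n L) (iter_in01 n L L_in01)) as [C|[C|C]].
    + exact (Hbad C).
    + exact (orbit_not_colour_boundary n ltac:(lia) Hgood C).
    + exact (orbit_not_jump_back n ltac:(lia) Hgood C).
Qed.

End PeriodicPoint.

Lemma left_gap_of_flat L R wL e1 : 0 <= L -> L < R -> R <= 1 ->
  (forall t, L <= t < R -> H t = H L) ->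
  in01 wL -> T wL = L -> 0 < e1 ->
  (forall x, L - e1 <= x < L -> exists w, in01 w /\ T w = x /\ chi w <> chi wL) ->
  exists eta, 0 < eta /\ forall x, in01 x -> x < L -> H x <= H L - eta.
Proof.
  intros HL0 HLR HR1 Hflat HwL TwL He1 Hpre.
  assert (HL : in01 L) by (split; lra).
  destruct (flat_left_end_periodic L ((L + R) / 2)) as [p Hp];
    [auto | split; lra | lra | symmetry; apply Hflat; lra |].
  apply NNPP; intro Hno.
  apply (periodic_point_not_approached L p HL Hp wL e1 HwL TwL He1 Hpre).
  intros eta Heta. apply NNPP; intro Hfar. apply Hno. exists eta. split; auto.
  intros x Hx HxL. apply Rnot_lt_le; intro Hlt. apply Hfar. exists x; auto.
Qed.

Lemma H_gap_of_adjacent_images (P Q : R -> Prop) L alpha beta c wL :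
  0 < alpha -> 0 < beta -> 0 <= L - beta -> L + alpha <= 1 ->
  (forall x, P x -> in01 x /\ H x = c /\ chi x = chi wL) -> P wL -> T wL = L ->
  (forall t, L <= t < L + alpha -> exists x, P x /\ T x = t) ->
  (forall y, Q y -> in01 y /\ chi y <> chi wL /\ L - beta <= T y < L) ->
  (forall t, L - beta <= t < L -> exists y, Q y /\ T y = t) ->
  exists eta, 0 < eta /\ forall y, Q y -> H y <= chi y / 2 + c - chi wL / 2 - eta.
Proof.
  intros Halpha Hbeta HL0 HL1 HP HwL TwL HPonto HQ HQonto.
  assert (HimP : forall t, L <= t < L + alpha -> H t = 2 * c - chi wL).
  { intros t Ht. destruct (HPonto t Ht) as [x [Hx <-]].
    destruct (HP x Hx) as [Hx01 [Hxc Hxchi]]. rewrite H_T, Hxc, Hxchi; auto. }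
  destruct (left_gap_of_flat L (L + alpha) wL beta) as [eta [Heta Hgap]];
    [lra | lra | lra | intros t Ht; rewrite !HimP; lra | apply HP, HwL | auto | auto | |].
  - intros t Ht. destruct (HQonto t Ht) as [y [Hy <-]].
    destruct (HQ y Hy) as [? [? _]]. exists y; auto.
  - exists (eta / 2). split; [lra|]. intros y Hy.
    destruct (HQ y Hy) as [Hy01 [_ [_ HTy]]].
    pose proof (Hgap (T y) (T_in01 y Hy01) HTy) as Hb.
    rewrite (HimP L) in Hb by lra. rewrite (H_rec y Hy01). lra.
Qed.

End ExpandingMap.

Lemma ind_in u v x : u <= x < v -> Defs.ind u v x = 1.
Proof. intros; unfold Defs.ind; destruct (Rle_dec u x); destruct (Rlt_dec x v); lra. Qed.

Lemma ind_below u v x : x < u -> Defs.ind u v x = 0.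
Proof. intros; unfold Defs.ind; destruct (Rle_dec u x); destruct (Rlt_dec x v); lra. Qed.

Lemma ind_above u v x : v <= x -> Defs.ind u v x = 0.
Proof. intros; unfold Defs.ind; destruct (Rle_dec u x); destruct (Rlt_dec x v); lra. Qed.

Lemma ind_01 u v x : 0 <= Defs.ind u v x <= 1.
Proof. unfold Defs.ind; destruct (Rle_dec u x); destruct (Rlt_dec x v); lra. Qed.

Lemma psum_eq0 f n : (forall i, (1 <= i <= n)%nat -> f i = 0) -> psum f n = 0.
Proof.
  induction n as [|n IH]; intros Hf; simpl; auto.
  rewrite IH, (Hf (S n)) by (lia || (intros; apply Hf; lia)). lra.
Qed.

Lemma psum_single f n j : (1 <= j <= n)%nat ->
  (forall i, (1 <= i <= n)%nat -> i <> j -> f i = 0) -> psum f n = f j.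
Proof.
  induction n as [|n IH]; intros Hj Hf; [lia|].
  simpl. destruct (Nat.eq_dec j (S n)) as [->|Hne].
  - rewrite psum_eq0; [lra|]. intros i Hi; apply Hf; lia.
  - rewrite IH, (Hf (S n)) by (lia || (intros; apply Hf; lia)). lra.
Qed.

Section PositivePsum.
Variables (f : nat -> R) (n : nat).
Hypothesis f_pos : forall i, (1 <= i <= n)%nat -> 0 < f i.

Lemma psum_le_mono i k : (i <= k <= n)%nat -> psum f i <= psum f k.
Proof.
  intros Hk. induction k as [|k IH].
  - replace i with 0%nat by lia; lra.
  - destruct (Nat.eq_dec i (S k)) as [->|Hne]; [lra|].
    simpl. pose proof (f_pos (S k) ltac:(lia)). pose proof (IH ltac:(lia)). lra.
Qed.

Lemma psum_ge0 k : (k <= n)%nat -> 0 <= psum f k.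
Proof. intros Hk. apply (psum_le_mono 0 k). lia. Qed.

Lemma psum_add_le i k : (i < k <= n)%nat -> psum f i + f k <= psum f k.
Proof.
  intros Hk. destruct k as [|k]; [lia|]. simpl.
  pose proof (psum_le_mono i k ltac:(lia)). lra.
Qed.

End PositivePsum.

Lemma psum_piece f n x : 0 <= x -> x < psum f n ->
  exists j, (j < n)%nat /\ psum f j <= x < psum f (S j).
Proof.
  induction n as [|n IH]; intros Hx0 Hxn; simpl in *; [lra|].
  destruct (Rlt_dec x (psum f n)) as [Hl|Hl].
  - destruct (IH Hx0 Hl) as [j [Hj Hx]]. exists j; split; [lia|auto].
  - exists n. split; [lia|]. simpl. lra.
Qed.

Lemma is_series_half_pow : is_series (fun n => / 2 ^ (n + 1)) 1.
Proof.
  assert (G : is_series (fun n => / 2 * (/ 2) ^ n) (/ 2 * / (1 - / 2))).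
  { assert (G0 := is_series_geom (/ 2) ltac:(rewrite Rabs_pos_eq; lra)).
    apply (is_series_scal_l (/ 2)) in G0. exact G0. }
  replace (/ 2 * / (1 - / 2)) with 1 in G by field.
  revert G. apply is_series_ext. intros n.
  rewrite pow_inv, Nat.add_1_r. simpl. rewrite Rinv_mult. reflexivity.
Qed.

Lemma closed_convex_hull_le (X : R -> Prop) M t :
  (forall y, X y -> y <= M) -> closed_convex_hull X t -> t <= M.
Proof.
  intros HX Ht. apply (Ht (fun u => u <= M)); auto.
  - intros x Hx. assert (Hp : 0 < x - M) by (unfold complementary in Hx; lra).
    exists (mkposreal _ Hp). intros y Hy.
    unfold disc in Hy; simpl in Hy. apply Rabs_def2 in Hy. unfold complementary. lra.
  - intros x y s Hx Hy Hs. nra.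
Qed.

Lemma closed_convex_hull_ge (X : R -> Prop) M t :
  (forall y, X y -> M <= y) -> closed_convex_hull X t -> M <= t.
Proof.
  intros HX Ht. apply (Ht (fun u => M <= u)); auto.
  - intros x Hx. assert (Hp : 0 < M - x) by (unfold complementary in Hx; lra).
    exists (mkposreal _ Hp). intros y Hy.
    unfold disc in Hy; simpl in Hy. apply Rabs_def2 in Hy. unfold complementary. lra.
  - intros x y s Hx Hy Hs. nra.
Qed.

Lemma singleton_image_const (f : R -> R) (C : R -> Prop) :
  is_singleton (image f C) -> exists c, forall x, C x -> f x = c.
Proof. intros [c Hc]. exists c. intros x Hx. apply Hc. exists x; auto. Qed.

Lemma shift_hull_lt_hull (f : R -> R) (P Q : R -> Prop) c M s :
  (forall x, P x -> f x = c) -> (forall y, Q y -> f y <= M) -> M + s < c ->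
  set_lt (shift (closed_convex_hull (image f Q)) s) (closed_convex_hull (image f P)).
Proof.
  intros HP HQ Hlt x z [y [Hy ->]] Hz.
  assert (y <= M).
  { apply (closed_convex_hull_le (image f Q) M y); auto. intros u [v [Hv <-]]; auto. }
  assert (c <= z).
  { apply (closed_convex_hull_ge (image f P) c z); auto.
    intros u [v [Hv <-]]. rewrite HP; auto; lra. }
  lra.
Qed.

Section DeckShuffler.
Variables (m : nat) (a b : nat -> R).
Hypothesis hm : (1 <= m)%nat.
Hypothesis ha : forall i, (1 <= i <= m)%nat -> 0 < a i.
Hypothesis hb : forall i, (1 <= i <= m)%nat -> 0 < b i.
Hypothesis hsum : psum a m + psum b m = 1.

Local Notation T := (Tmap m a b).
Local Notation chi := (chiB m a b).
Local Notation HH := (Hmap m a b).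
Local Notation sa := (psum a m).
Local Notation it n x := (Nat.iter n T x).

Let a_le := psum_le_mono a m ha.
Let b_le := psum_le_mono b m hb.
Let a_ge0 := psum_ge0 a m ha.
Let b_ge0 := psum_ge0 b m hb.

(* [inA j] and [inB j] are the intervals A_(j+1) and B_(j+1). *)
Definition inA j x := psum a j <= x < psum a (S j).
Definition inB j x := sa + psum b j <= x < sa + psum b (S j).

Lemma Aset_succ j : Aset a (S j) = inA j.
Proof. unfold Aset, inA. rewrite Nat.sub_succ, Nat.sub_0_r. reflexivity. Qed.

Lemma Bset_succ j : Bset m a b (S j) = inB j.
Proof. unfold Bset, inB, SA. rewrite Nat.sub_succ, Nat.sub_0_r. reflexivity. Qed.

Lemma inA_in01 j x : (j < m)%nat -> inA j x -> in01 x.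
Proof.
  intros Hj [? ?]. pose proof (a_ge0 j ltac:(lia)). pose proof (a_le (S j) m ltac:(lia)).
  pose proof (b_ge0 m (le_n m)). split; lra.
Qed.

Lemma inB_in01 j x : (j < m)%nat -> inB j x -> in01 x.
Proof.
  intros Hj [? ?]. pose proof (b_ge0 j ltac:(lia)). pose proof (b_le (S j) m ltac:(lia)).
  pose proof (a_ge0 m (le_n m)). split; lra.
Qed.

Lemma in01_pieces x : in01 x ->
  (exists j, (j < m)%nat /\ inA j x) \/ (exists j, (j < m)%nat /\ inB j x).
Proof.
  intros [? ?]. destruct (Rlt_dec x sa) as [Hl|Hl].
  - left. apply psum_piece; auto.
  - right. destruct (psum_piece b m (x - sa)) as [j [Hj ?]]; [lra|lra|].
    exists j; split; auto. unfold inB; lra.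
Qed.

Lemma T_inA j x : (j < m)%nat -> inA j x -> T x = x + psum b (S j).
Proof.
  intros Hj [? ?]. unfold Tmap, SA.
  rewrite (psum_single (fun i => Defs.ind (psum a (i - 1)) (psum a i) x * psum b i) m (S j)),
    (psum_eq0 (fun i => Defs.ind (sa + psum b (i - 1)) (sa + psum b i) x * (sa - psum a (i - 1))));
    [| | lia |]; cbv beta.
  - rewrite Nat.sub_succ, Nat.sub_0_r, ind_in by lra. lra.
  - intros i Hi. rewrite ind_below; [lra|].
    pose proof (a_le (S j) m ltac:(lia)). pose proof (b_ge0 (i - 1) ltac:(lia)). lra.
  - intros i Hi Hne. destruct (Nat.lt_ge_cases i (S j)).
    + rewrite ind_above; [lra|]. pose proof (a_le i j ltac:(lia)). lra.
    + rewrite ind_below; [lra|]. pose proof (a_le (S j) (i - 1) ltac:(lia)). lra.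
Qed.

Lemma T_inB j x : (j < m)%nat -> inB j x -> T x = x - (sa - psum a j).
Proof.
  intros Hj [? ?]. unfold Tmap, SA.
  rewrite (psum_eq0 (fun i => Defs.ind (psum a (i - 1)) (psum a i) x * psum b i)),
    (psum_single (fun i => Defs.ind (sa + psum b (i - 1)) (sa + psum b i) x
                            * (sa - psum a (i - 1))) m (S j));
    [| lia | |]; cbv beta.
  - rewrite Nat.sub_succ, Nat.sub_0_r, ind_in by lra. lra.
  - intros i Hi Hne. destruct (Nat.lt_ge_cases i (S j)).
    + rewrite ind_above; [lra|]. pose proof (b_le i j ltac:(lia)). lra.
    + rewrite ind_below; [lra|]. pose proof (b_le (S j) (i - 1) ltac:(lia)). lra.
  - intros i Hi. rewrite ind_above; [lra|].
    pose proof (a_le i m ltac:(lia)). pose proof (b_ge0 j ltac:(lia)). lra.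
Qed.

Lemma chi_inA j x : (j < m)%nat -> inA j x -> chi x = 0.
Proof.
  intros Hj [? ?]. unfold chiB, SA. apply ind_below.
  pose proof (a_le (S j) m ltac:(lia)). lra.
Qed.

Lemma chi_inB j x : (j < m)%nat -> inB j x -> chi x = 1.
Proof.
  intros Hj [? ?]. unfold chiB, SA. apply ind_in.
  pose proof (b_le (S j) m ltac:(lia)). pose proof (b_ge0 j ltac:(lia)). lra.
Qed.

Lemma chi_cases x : in01 x -> (chi x = 0 /\ x < sa) \/ (chi x = 1 /\ sa <= x).
Proof.
  intros Hx. destruct (in01_pieces x Hx) as [[j [Hj Hp]]|[j [Hj Hp]]].
  - left. split; [eapply chi_inA; eauto|].
    destruct Hp. pose proof (a_le (S j) m ltac:(lia)). lra.
  - right. split; [eapply chi_inB; eauto|].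
    destruct Hp. pose proof (b_ge0 j ltac:(lia)). lra.
Qed.

Lemma chi_01 x : 0 <= chi x <= 1.
Proof. apply ind_01. Qed.

Lemma T_in01 x : in01 x -> in01 (T x).
Proof.
  intros Hx. destruct (in01_pieces x Hx) as [[j [Hj Hp]]|[j [Hj Hp]]].
  - rewrite (T_inA j x Hj Hp). destruct Hp.
    pose proof (a_ge0 j ltac:(lia)). pose proof (b_ge0 (S j) ltac:(lia)).
    pose proof (a_le (S j) m ltac:(lia)). pose proof (b_le (S j) m ltac:(lia)). split; lra.
  - rewrite (T_inB j x Hj Hp). destruct Hp.
    pose proof (a_ge0 j ltac:(lia)). pose proof (b_ge0 j ltac:(lia)).
    pose proof (a_le j m ltac:(lia)). pose proof (b_le (S j) m ltac:(lia)). split; lra.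
Qed.

Lemma T_expand x y : in01 x -> in01 y -> x < y -> chi x = chi y ->
  T x < T y /\ y - x <= T y - T x.
Proof.
  intros Hx Hy Hl Hc.
  destruct (in01_pieces x Hx) as [[j [Hj Hp]]|[j [Hj Hp]]];
  destruct (in01_pieces y Hy) as [[k [Hk Hq]]|[k [Hk Hq]]].
  - rewrite (T_inA j x Hj Hp), (T_inA k y Hk Hq).
    assert (j <= k)%nat.
    { destruct (Nat.le_gt_cases j k); auto. destruct Hp, Hq.
      pose proof (a_le (S k) j ltac:(lia)). lra. }
    pose proof (b_le (S j) (S k) ltac:(lia)). lra.
  - rewrite (chi_inA j x Hj Hp), (chi_inB k y Hk Hq) in Hc. lra.
  - rewrite (chi_inB j x Hj Hp), (chi_inA k y Hk Hq) in Hc. lra.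
  - rewrite (T_inB j x Hj Hp), (T_inB k y Hk Hq).
    assert (j <= k)%nat.
    { destruct (Nat.le_gt_cases j k); auto. destruct Hp, Hq.
      pose proof (b_le (S k) j ltac:(lia)). lra. }
    pose proof (a_le j k ltac:(lia)). lra.
Qed.

Lemma T_images_disjoint x y : in01 x -> in01 y -> chi x = 0 -> chi y = 1 -> T x <> T y.
Proof.
  intros Hx Hy Cx Cy.
  destruct (in01_pieces x Hx) as [[j [Hj Hp]]|[j [Hj Hp]]];
    [|rewrite (chi_inB j x Hj Hp) in Cx; lra].
  destruct (in01_pieces y Hy) as [[k [Hk Hq]]|[k [Hk Hq]]];
    [rewrite (chi_inA k y Hk Hq) in Cy; lra|].
  rewrite (T_inA j x Hj Hp), (T_inB k y Hk Hq). destruct Hp, Hq.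
  destruct (Nat.lt_ge_cases j k).
  - pose proof (a_le (S j) k ltac:(lia)). pose proof (b_le (S j) k ltac:(lia)). lra.
  - pose proof (a_le k j ltac:(lia)). pose proof (b_le (S k) (S j) ltac:(lia)). lra.
Qed.

Lemma T_inj x y : in01 x -> in01 y -> T x = T y -> x = y.
Proof.
  intros Hx Hy E.
  destruct (chi_cases x Hx) as [[Cx _]|[Cx _]], (chi_cases y Hy) as [[Cy _]|[Cy _]].
  2: exfalso; exact (T_images_disjoint x y Hx Hy Cx Cy E).
  2: exfalso; exact (T_images_disjoint y x Hy Hx Cy Cx (eq_sym E)).
  all: destruct (Rtotal_order x y) as [Hl|[Hl|Hl]]; auto;
    [destruct (T_expand x y) | destruct (T_expand y x)]; auto; lra.
Qed.

Definition H_term x n := chi (it n x) / 2 ^ (n + 1).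

Lemma H_term_bounds x n : 0 <= H_term x n <= / 2 ^ (n + 1).
Proof.
  unfold H_term. pose proof (chi_01 (it n x)).
  assert (0 < / 2 ^ (n + 1)) by (apply Rinv_0_lt_compat, pow_lt; lra).
  unfold Rdiv. split; nra.
Qed.

Lemma ex_series_H_term x : ex_series (H_term x).
Proof.
  apply (@ex_series_le _ R_CompleteNormedModule _ (fun n => / 2 ^ (n + 1))).
  - intros n. pose proof (H_term_bounds x n). unfold norm; simpl; unfold abs; simpl.
    rewrite Rabs_pos_eq; lra.
  - eexists; apply is_series_half_pow.
Qed.

Lemma H_rec x : HH x = chi x / 2 + HH (T x) / 2.
Proof.
  unfold Hmap. change (Series (H_term x) = chi x / 2 + Series (H_term (T x)) / 2).
  rewrite Series_incr_1 by apply ex_series_H_term.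
  rewrite (Series_ext _ (fun n => / 2 * H_term (T x) n)), Series_scal_l.
  - unfold H_term. simpl. lra.
  - intros n. unfold H_term. rewrite Nat.iter_succ_r.
    replace (S n + 1)%nat with (S (n + 1)) by lia. simpl. field.
    apply pow_nonzero; lra.
Qed.

Lemma H_bounds x : 0 <= HH x <= 1.
Proof.
  unfold Hmap. change (0 <= Series (H_term x) <= 1). split.
  - replace 0 with (Series (fun n => 0 * H_term x n)) by (rewrite Series_scal_l; lra).
    apply Series_le; [intros n; pose proof (H_term_bounds x n); lra | apply ex_series_H_term].
  - rewrite <- (is_series_unique _ _ is_series_half_pow).
    apply Series_le; [apply H_term_bounds | eexists; apply is_series_half_pow].
Qed.

(* Within a colour, T moves points by at least |B_1| to the right or |A_m| to the left. *)
Definition min_step := Rmin (b 1%nat) (a m).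

Lemma min_step_pos : 0 < min_step.
Proof. apply Rmin_pos; [apply hb | apply ha]; lia. Qed.

Lemma T_step_right x : in01 x -> chi x = 0 -> x + min_step <= T x.
Proof.
  intros Hx Cx. destruct (in01_pieces x Hx) as [[j [Hj Hp]]|[j [Hj Hp]]].
  - rewrite (T_inA j x Hj Hp). pose proof (b_le 1 (S j) ltac:(lia)).
    pose proof (Rmin_l (b 1%nat) (a m)). unfold min_step. simpl in *. lra.
  - rewrite (chi_inB j x Hj Hp) in Cx; lra.
Qed.

Lemma T_step_left x : in01 x -> chi x = 1 -> T x + min_step <= x.
Proof.
  intros Hx Cx. destruct (in01_pieces x Hx) as [[j [Hj Hp]]|[j [Hj Hp]]].
  - rewrite (chi_inA j x Hj Hp) in Cx; lra.
  - rewrite (T_inB j x Hj Hp). pose proof (psum_add_le a m ha j m ltac:(lia)).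
    pose proof (Rmin_r (b 1%nat) (a m)). unfold min_step. lra.
Qed.

Lemma chi_0_or_1 x : in01 x -> chi x = 0 \/ chi x = 1.
Proof. intros Hx; destruct (chi_cases x Hx) as [[E _]|[E _]]; auto. Qed.

Lemma bounded_runs : exists K, forall x, in01 x ->
  (exists i, (i < K)%nat /\ chi (it i x) = 1) /\
  (exists i, (i < K)%nat /\ chi (it i x) = 0).
Proof.
  destruct (exists_nat_mul_gt 1 min_step min_step_pos) as [K HK].
  exists K. intros x Hx.
  assert (Hit := fun i => iter_in01 T T_in01 i x Hx).
  split; apply NNPP; intro Hno.
  - assert (Hdrift : forall k, (k < K)%nat -> it k x + min_step <= it (S k) x).
    { intros k Hk. apply T_step_right; auto.
      destruct (chi_0_or_1 _ (Hit k)) as [E|E]; auto. exfalso; eauto. }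
    pose proof (drift_bound (fun k => it k x) min_step K Hdrift).
    destruct Hx, (Hit K). simpl in *. lra.
  - assert (Hdrift : forall k, (k < K)%nat -> - it k x + min_step <= - it (S k) x).
    { intros k Hk. destruct (chi_0_or_1 _ (Hit k)) as [E|E]; [exfalso; eauto|].
      pose proof (T_step_left (it k x) (Hit k) E). simpl. lra. }
    pose proof (drift_bound (fun k => - it k x) min_step K Hdrift).
    destruct Hx, (Hit K). simpl in *. lra.
Qed.

Lemma H_ge_of_chi1 i y : chi (it i y) = 1 -> / 2 ^ (i + 1) <= HH y.
Proof.
  revert y; induction i as [|i IH]; intros y Hc; rewrite H_rec.
  - simpl in Hc. rewrite Hc. pose proof (H_bounds (T y)). simpl. lra.
  - rewrite Nat.iter_succ_r in Hc. specialize (IH _ Hc). pose proof (chi_01 y).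
    replace (S i + 1)%nat with (S (i + 1)) by lia. simpl. rewrite Rinv_mult. lra.
Qed.

Lemma H_le_of_chi0 i y : chi (it i y) = 0 -> HH y <= 1 - / 2 ^ (i + 1).
Proof.
  revert y; induction i as [|i IH]; intros y Hc; rewrite H_rec.
  - simpl in Hc. rewrite Hc. pose proof (H_bounds (T y)). simpl. lra.
  - rewrite Nat.iter_succ_r in Hc. specialize (IH _ Hc). pose proof (chi_01 y).
    replace (S i + 1)%nat with (S (i + 1)) by lia. simpl. rewrite Rinv_mult. lra.
Qed.

(* Runs of a colour have length < K, so the next K binary digits of H (T x)
   contain both a 0 and a 1. *)
Lemma H_separated : exists dl, 0 < dl /\ forall x, in01 x ->
  (chi x = 0 /\ HH x <= 1/2 - dl) \/ (chi x = 1 /\ 1/2 + dl <= HH x).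
Proof.
  destruct bounded_runs as [K HK]. exists (/ 2 ^ (K + 1)).
  split; [apply Rinv_0_lt_compat, pow_lt; lra|].
  intros x Hx. pose proof (T_in01 x Hx) as HT.
  assert (Hsmall : forall i, (i < K)%nat -> / 2 ^ K <= / 2 ^ (i + 1)).
  { intros i Hi. apply Rinv_le_contravar; [apply pow_lt; lra | apply Rle_pow; lra || lia]. }
  replace (/ 2 ^ (K + 1)) with (/ 2 ^ K / 2)
    by (rewrite Nat.add_1_r; simpl; rewrite Rinv_mult; lra).
  destruct (chi_0_or_1 x Hx) as [C|C]; [left|right]; split; auto; rewrite H_rec, C.
  - destruct (HK (T x) HT) as [_ [i [Hi Hc]]].
    pose proof (H_le_of_chi0 i _ Hc). pose proof (Hsmall i Hi). lra.
  - destruct (HK (T x) HT) as [[i [Hi Hc]] _].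
    pose proof (H_ge_of_chi1 i _ Hc). pose proof (Hsmall i Hi). lra.
Qed.

(* If x < y but H x > H y, the order and the gap 2^n (H x - H y) would
   persist along the orbits, exceeding the bound 1. *)
Lemma H_mono x y : in01 x -> in01 y -> x <= y -> HH x <= HH y.
Proof.
  intros Hx Hy Hxy. destruct H_separated as [dl [Hdl Hsep]].
  destruct (Rle_lt_or_eq_dec x y Hxy) as [Hl|<-]; [|lra].
  apply Rnot_lt_le; intro Hg. set (d := HH x - HH y).
  assert (Hd : 0 < d) by (unfold d; lra).
  assert (Horb : forall n, in01 (it n x) /\ in01 (it n y) /\ it n x < it n y /\
            HH (it n x) - HH (it n y) = 2 ^ n * d).
  { intros n; induction n as [|n [U [V [W X]]]].
    { simpl. unfold d. split; [|split; [|split]]; auto; lra. }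
    set (u := it n x) in *. set (v := it n y) in *.
    assert (Cuv : chi u = chi v).
    { assert (0 < 2 ^ n * d) by (pose proof (pow2_ge_1 n); apply Rmult_lt_0_compat; lra).
      destruct (chi_cases u U) as [[Cu Su]|[Cu Su]], (chi_cases v V) as [[Cv Sv]|[Cv Sv]];
        try lra.
      destruct (Hsep u U) as [[? ?]|[? ?]], (Hsep v V) as [[? ?]|[? ?]]; lra. }
    destruct (T_expand u v U V W Cuv).
    simpl. fold u v. rewrite (H_rec u), (H_rec v), Cuv in X.
    split; [|split; [|split]]; auto using T_in01; lra. }
  destruct (exists_pow2_mul_gt_1 d Hd) as [n Hn].
  destruct (Horb n) as [_ [_ [_ E]]].
  pose proof (H_bounds (it n x)). pose proof (H_bounds (it n y)). lra.
Qed.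

Lemma left_germ_inA j z : (j < m)%nat -> inA j z ->
  left_translating T z \/ colour_boundary chi z \/ jumps_back T chi z.
Proof.
  intros Hj Hz. pose proof (inA_in01 j z Hj Hz). destruct Hz as [Hz1 Hz2].
  destruct (Rlt_dec (psum a j) z) as [Hl|Hl].
  - left. exists (z - psum a j). split; [lra|]. intros e He.
    assert (Hze : inA j (z - e)) by (split; lra).
    split; [exact (inA_in01 j _ Hj Hze)|].
    rewrite (T_inA j _ Hj Hze), (T_inA j z Hj (conj Hz1 Hz2)). lra.
  - assert (Ez : z = psum a j) by lra. destruct j as [|j].
    + right; left. exists 1. split; [lra|]. intros e He [He0 _]. simpl in Ez. lra.
    + right; right. set (w := sa + psum b (S j)).
      pose proof (hb (S (S j)) ltac:(lia)). pose proof (ha (S j) ltac:(lia)).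
      assert (Hw : inB (S j) w) by (unfold inB, w; simpl; lra).
      exists w. split; [exact (inB_in01 (S j) w Hj Hw)|].
      rewrite (chi_inB (S j) w Hj Hw), (chi_inA (S j) z Hj (conj Hz1 Hz2)). split; [lra|].
      rewrite (T_inB (S j) w Hj Hw), (T_inA (S j) z Hj (conj Hz1 Hz2)).
      split; [unfold w; rewrite Ez; simpl; lra|].
      exists (a (S j)). split; [lra|]. intros e He.
      assert (Hze : inA j (z - e)) by (unfold inA; simpl in Ez; lra).
      split; [exact (inA_in01 j _ ltac:(lia) Hze)|].
      rewrite (T_inA j _ ltac:(lia) Hze). unfold w. lra.
Qed.

Lemma left_germ_inB j z : (j < m)%nat -> inB j z ->
  left_translating T z \/ colour_boundary chi z \/ jumps_back T chi z.
Proof.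
  intros Hj Hz. pose proof (inB_in01 j z Hj Hz) as Hz01. destruct Hz as [Hz1 Hz2].
  destruct (Rlt_dec (sa + psum b j) z) as [Hl|Hl].
  - left. exists (z - (sa + psum b j)). split; [lra|]. intros e He.
    assert (Hze : inB j (z - e)) by (split; lra).
    split; [exact (inB_in01 j _ Hj Hze)|].
    rewrite (T_inB j _ Hj Hze), (T_inB j z Hj (conj Hz1 Hz2)). lra.
  - assert (Ez : z = sa + psum b j) by lra. destruct j as [|j].
    + right; left. exists 1. split; [lra|]. intros e He Hze.
      rewrite (chi_inB 0 z Hj (conj Hz1 Hz2)).
      destruct (chi_cases _ Hze) as [[C _]|[_ C]]; [lra | simpl in Ez; lra].
    + right; right. exists (psum a j).
      pose proof (ha (S j) ltac:(lia)). pose proof (hb (S j) ltac:(lia)).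
      assert (Hw : inA j (psum a j)) by (unfold inA; simpl; lra).
      split; [exact (inA_in01 j _ ltac:(lia) Hw)|].
      rewrite (chi_inA j _ ltac:(lia) Hw), (chi_inB (S j) z Hj (conj Hz1 Hz2)). split; [lra|].
      rewrite (T_inA j _ ltac:(lia) Hw), (T_inB (S j) z Hj (conj Hz1 Hz2)).
      split; [rewrite Ez; simpl; lra|].
      exists (b (S j)). split; [lra|]. intros e He.
      assert (Hze : inB j (z - e)) by (unfold inB; simpl in Ez; lra).
      split; [exact (inB_in01 j _ ltac:(lia) Hze)|].
      rewrite (T_inB j _ ltac:(lia) Hze). simpl in *. lra.
Qed.

Lemma T_left_germ z : in01 z ->
  left_translating T z \/ colour_boundary chi z \/ jumps_back T chi z.
Proof.
  intros Hz. destruct (in01_pieces z Hz) as [[j [Hj Hp]]|[j [Hj Hp]]];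
    [exact (left_germ_inA j z Hj Hp) | exact (left_germ_inB j z Hj Hp)].
Qed.

Lemma H_gap_below_flat P Q L alpha beta c wL :
  0 < alpha -> 0 < beta -> 0 <= L - beta -> L + alpha <= 1 ->
  (forall x, P x -> in01 x /\ HH x = c /\ chi x = chi wL) -> P wL -> T wL = L ->
  (forall t, L <= t < L + alpha -> exists x, P x /\ T x = t) ->
  (forall y, Q y -> in01 y /\ chi y <> chi wL /\ L - beta <= T y < L) ->
  (forall t, L - beta <= t < L -> exists y, Q y /\ T y = t) ->
  exists eta, 0 < eta /\ forall y, Q y -> HH y <= chi y / 2 + c - chi wL / 2 - eta.
Proof.
  destruct H_separated as [dl [Hdl Hsep]].
  exact (H_gap_of_adjacent_images T HH chi dl T_in01 T_inj (fun x _ => H_rec x) Hdl Hsep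
           H_mono T_expand T_left_germ P Q L alpha beta c wL).
Qed.

Lemma H_gap_B_of_flat_A j c : (j < m)%nat -> (forall x, inA j x -> HH x = c) ->
  exists eta, 0 < eta /\ forall y, inB j y -> HH y <= 1/2 + c - eta.
Proof.
  intros Hj Hc.
  assert (Ea : psum a (S j) = psum a j + a (S j)) by reflexivity.
  assert (Eb : psum b (S j) = psum b j + b (S j)) by reflexivity.
  pose proof (ha (S j) ltac:(lia)). pose proof (hb (S j) ltac:(lia)).
  pose proof (a_ge0 j ltac:(lia)). pose proof (b_ge0 j ltac:(lia)).
  pose proof (a_le (S j) m ltac:(lia)). pose proof (b_le (S j) m ltac:(lia)).
  assert (Hw : inA j (psum a j)) by (unfold inA; lra).
  assert (Cw : chi (psum a j) = 0) by exact (chi_inA j _ Hj Hw).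
  destruct (H_gap_below_flat (inA j) (inB j) (psum a j + psum b (S j)) (a (S j)) (b (S j))
              c (psum a j)) as [eta [Heta Hgap]]; try lra; auto.
  - intros x Hx. rewrite Cw, (chi_inA j x Hj Hx). split; [exact (inA_in01 j x Hj Hx) | auto].
  - apply T_inA; auto.
  - intros t Ht. exists (t - psum b (S j)).
    assert (Hx : inA j (t - psum b (S j))) by (unfold inA; lra).
    split; [auto | rewrite (T_inA j _ Hj Hx); lra].
  - intros y Hy. rewrite Cw, (chi_inB j y Hj Hy), (T_inB j y Hj Hy).
    split; [exact (inB_in01 j y Hj Hy)|]. destruct Hy. split; lra.
  - intros t Ht. exists (t + (sa - psum a j)).
    assert (Hy : inB j (t + (sa - psum a j))) by (unfold inB; lra).
    split; [auto | rewrite (T_inB j _ Hj Hy); lra].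
  - exists eta. split; auto. intros y Hy.
    pose proof (Hgap y Hy) as G. rewrite Cw, (chi_inB j y Hj Hy) in G. lra.
Qed.

Lemma H_gap_A_of_flat_B j c : (S j < m)%nat -> (forall x, inB (S j) x -> HH x = c) ->
  exists eta, 0 < eta /\ forall y, inA j y -> HH y <= c - 1/2 - eta.
Proof.
  intros Hj Hc.
  assert (Ea : psum a (S j) = psum a j + a (S j)) by reflexivity.
  assert (Eb : psum b (S (S j)) = psum b (S j) + b (S (S j))) by reflexivity.
  pose proof (ha (S j) ltac:(lia)). pose proof (hb (S (S j)) ltac:(lia)).
  pose proof (a_ge0 j ltac:(lia)). pose proof (b_ge0 (S j) ltac:(lia)).
  pose proof (a_le (S j) m ltac:(lia)). pose proof (b_le (S (S j)) m ltac:(lia)).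
  set (w := sa + psum b (S j)).
  assert (Hw : inB (S j) w) by (unfold inB, w; lra).
  assert (Cw : chi w = 1) by exact (chi_inB (S j) _ Hj Hw).
  destruct (H_gap_below_flat (inB (S j)) (inA j) (psum a (S j) + psum b (S j))
              (b (S (S j))) (a (S j)) c w) as [eta [Heta Hgap]]; try lra; auto.
  - intros x Hx. rewrite Cw, (chi_inB (S j) x Hj Hx).
    split; [exact (inB_in01 (S j) x Hj Hx) | auto].
  - rewrite (T_inB (S j) w Hj Hw). unfold w. lra.
  - intros t Ht. exists (t + (sa - psum a (S j))).
    assert (Hx : inB (S j) (t + (sa - psum a (S j)))) by (unfold inB; lra).
    split; [auto | rewrite (T_inB (S j) _ Hj Hx); lra].
  - intros y Hy. rewrite Cw, (chi_inA j y ltac:(lia) Hy), (T_inA j y ltac:(lia) Hy).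
    split; [exact (inA_in01 j y ltac:(lia) Hy)|]. destruct Hy. split; lra.
  - intros t Ht. exists (t - psum b (S j)).
    assert (Hy : inA j (t - psum b (S j))) by (unfold inA; lra).
    split; [auto | rewrite (T_inA j _ ltac:(lia) Hy); lra].
  - exists eta. split; auto. intros y Hy.
    pose proof (Hgap y Hy) as G. rewrite Cw, (chi_inA j y ltac:(lia) Hy) in G. lra.
Qed.

Lemma shifted_B_below_flat_A i : (1 <= i <= m - 1)%nat ->
  is_singleton (image HH (Aset a i)) ->
  set_lt (shift (closed_convex_hull (image HH (Bset m a b i))) (- (1/2)))
         (closed_convex_hull (image HH (Aset a i))).
Proof.
  intros Hi Hs. destruct i as [|j]; [lia|]. rewrite Aset_succ, Bset_succ in *.
  destruct (singleton_image_const _ _ Hs) as [c Hc].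
  destruct (H_gap_B_of_flat_A j c ltac:(lia) Hc) as [eta [Heta Hgap]].
  apply (shift_hull_lt_hull HH _ _ c (1/2 + c - eta)); auto; lra.
Qed.

Lemma shifted_A_below_flat_B i : (2 <= i <= m)%nat ->
  is_singleton (image HH (Bset m a b i)) ->
  set_lt (shift (closed_convex_hull (image HH (Aset a (i - 1)))) (1/2))
         (closed_convex_hull (image HH (Bset m a b i))).
Proof.
  intros Hi Hs. destruct i as [|[|j]]; [lia|lia|].
  replace (S (S j) - 1)%nat with (S j) by lia. rewrite Aset_succ, Bset_succ in *.
  destruct (singleton_image_const _ _ Hs) as [c Hc].
  destruct (H_gap_A_of_flat_B j c ltac:(lia) Hc) as [eta [Heta Hgap]].
  apply (shift_hull_lt_hull HH _ _ c (c - 1/2 - eta)); auto; lra.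
Qed.

(* A_m and B_1 have different colours, so H separates them. *)
Lemma Am_B1_not_singleton : ~ is_singleton (image HH (setU (Aset a m) (Bset m a b 1))).
Proof.
  intros Hs. destruct (singleton_image_const _ _ Hs) as [c Hc].
  destruct H_separated as [dl [Hdl Hsep]].
  assert (EA : Aset a m = inA (m - 1)) by (rewrite <- Aset_succ; f_equal; lia).
  assert (Ha : inA (m - 1) (psum a (m - 1))).
  { split; [lra|]. replace (S (m - 1)) with m by lia.
    pose proof (psum_add_le a m ha (m - 1) m ltac:(lia)). pose proof (ha m ltac:(lia)). lra. }
  assert (Hb : inB 0 sa) by (split; simpl; pose proof (hb 1%nat ltac:(lia)); lra).
  pose proof (Hc _ (or_introl (eq_ind_r (fun A => A _) Ha EA))) as Hca.
  pose proof (Hc _ (or_intror (eq_ind_r (fun B => B _) Hb (Bset_succ 0)))) as Hcb.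
  destruct (Hsep _ (inA_in01 (m - 1) _ ltac:(lia) Ha)) as [[_ ?]|[C ?]];
    [|rewrite (chi_inA (m - 1) _ ltac:(lia) Ha) in C; lra].
  destruct (Hsep _ (inB_in01 0 _ ltac:(lia) Hb)) as [[C ?]|[_ ?]];
    [rewrite (chi_inB 0 _ ltac:(lia) Hb) in C; lra | lra].
Qed.

End DeckShuffler.

Theorem proposition4 (m : nat) (a b : nat -> R)
  (hm : (1 <= m)%nat)
  (ha : forall i, (1 <= i <= m)%nat -> 0 < a i)
  (hb : forall i, (1 <= i <= m)%nat -> 0 < b i)
  (hsum : psum a m + psum b m = 1) :
  let H := Hmap m a b in
  let J := fun C : R -> Prop => closed_convex_hull (image H C) in
  let A := Aset a in
  let B := Bset m a b in
  (forall i, (1 <= i)%nat -> (i <= m - 1)%nat ->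
     is_singleton (image H (A i)) ->
     set_lt (shift (J (B i)) (- (1/2))) (J (A i)) \/
     set_lt (J (A i)) (shift (J (B (S i))) (- (1/2)))) /\
  (forall i, (2 <= i)%nat -> (i <= m)%nat ->
     is_singleton (image H (B i)) ->
     set_lt (shift (J (A (i - 1)%nat)) (1/2)) (J (B i)) \/
     set_lt (J (B i)) (shift (J (A i)) (1/2))) /\
  (is_singleton (image H (setU (A m) (B 1%nat))) ->
     set_lt (shift (J (B m)) (- (1/2))) (J (setU (A m) (B 1%nat))) \/
     set_lt (J (setU (A m) (B 1%nat))) (shift (J (A 1%nat)) (1/2))).
Proof.
  intros H J A B. split; [|split].
  - intros i Hi1 Hi2 Hs. left. apply (shifted_B_below_flat_A m a b); auto.
  - intros i Hi1 Hi2 Hs. left. apply (shifted_A_below_flat_B m a b); auto.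
  - intros Hs. exfalso. exact (Am_B1_not_singleton m a b hm ha hb hsum Hs).
Qed.
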